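(* Let $F\subseteq\mathbb{R}^2$ be self-homothetic, generated by an IFS $\Phi$ with uniform contraction ratio $\lambda$ and the SSC, and not contained in an affine line. Suppose that $\gamma\cdot(P_1(F),0)+t\subseteq F$ for some $\gamma>0$, $t\in\mathbb{R}^2$. Then the projected IFS $P_1\Phi$ has the weak separation condition.
   Context: Self-homothetic: $\Phi=\{\phi_i(z)=\lambda z+t_i\}$. SSC: $\phi_i(F)$ pairwise disjoint. $P_1(x,y)=x$; $(A,0)=\{(a,0):a\in A\}$. $P_1\Phi=\{x\mapsto\lambda x+P_1(t_i)\}$, an IFS on $\mathbb{R}$ with attractor $P_1(F)$. WSC: $\mathrm{Id}\notin\overline{\{\psi_I^{-1}\circ\psi_J: I\ne J\}\setminus\{\mathrm{Id}\}}$, closure with respect to pointwise convergence on the group of similarities of $\mathbb{R}$. *)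

From Stdlib Require Import Reals List.
Import ListNotations.
Open Scope R_scope.

(* Points of R^2 are pairs. A self-homothetic IFS on R^2 with uniform ratio
   lam is given by lam and the list of translations ts:
   phi_i(z) = lam * z + t_i. *)
Definition phi2 (lam : R) (ts : list (R * R)) (i : nat) (z : R * R) : R * R :=
  let t := nth i ts (0, 0) in
  (lam * fst z + fst t, lam * snd z + snd t).

Definition bounded2 (F : R * R -> Prop) : Prop :=
  exists M : R, forall z, F z -> Rabs (fst z) <= M /\ Rabs (snd z) <= M.

Definition closed2 (F : R * R -> Prop) : Prop :=
  forall z : R * R,
    (forall eps : R, 0 < eps ->
       exists w, F w /\ Rabs (fst w - fst z) < eps /\ Rabs (snd w - snd z) < eps) ->
    F z.

Definition is_attractor2 (lam : R) (ts : list (R * R)) (F : R * R -> Prop) : Prop :=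
  (exists z, F z) /\ bounded2 F /\ closed2 F /\
  (forall z, F z <-> exists i, (i < length ts)%nat /\ exists w, F w /\ z = phi2 lam ts i w).

Definition SSC2 (lam : R) (ts : list (R * R)) (F : R * R -> Prop) : Prop :=
  forall i j : nat, (i < length ts)%nat -> (j < length ts)%nat -> i <> j ->
    forall w w', F w -> F w' -> phi2 lam ts i w <> phi2 lam ts j w'.

Definition in_affine_line (F : R * R -> Prop) : Prop :=
  exists a b c : R, (a <> 0 \/ b <> 0) /\ forall z, F z -> a * fst z + b * snd z = c.

Definition psi1 (lam : R) (ts : list (R * R)) (i : nat) (x : R) : R :=
  lam * x + fst (nth i ts (0, 0)).

Definition is_word (ts : list (R * R)) (w : list nat) : Prop :=
  Forall (fun i => (i < length ts)%nat) w.

Definition psi_word (lam : R) (ts : list (R * R)) (w : list nat) (x : R) : R :=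
  fold_right (fun i acc => psi1 lam ts i acc) x w.

(* g = psi_I^{-1} o psi_J, characterized by psi_I o g = psi_J
   (psi_I is a bijection of R when lam <> 0). *)
Definition is_relative_map (lam : R) (ts : list (R * R)) (I J : list nat) (g : R -> R) : Prop :=
  forall x, psi_word lam ts I (g x) = psi_word lam ts J x.

(* Weak separation condition for P_1 Phi:
   Id is not in the closure, for the topology of pointwise convergence,
   of { psi_I^{-1} o psi_J : I <> J } \ {Id}.
   A basic pointwise neighbourhood of Id is given by finitely many points xs
   and eps > 0. *)
Definition WSC1 (lam : R) (ts : list (R * R)) : Prop :=
  ~ (forall (xs : list R) (eps : R), 0 < eps ->
       exists (I J : list nat) (g : R -> R),
         is_word ts I /\ is_word ts J /\ I <> J /\
         is_relative_map lam ts I J g /\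
         (exists x, g x <> x) /\
         (forall x, In x xs -> Rabs (g x - x) < eps)).

(* If the WSC fails, relative maps psi_I^-1 o psi_J close to the identity
   are translations by arbitrarily small beta <> 0, and then psi_I maps both
   K and K + beta into K = P_1(F).  Composing such words gives, for every L, a
   word I and a set D of shifts, 1-dense in [0, L], with psi_I(K + D) in K.
   Through the copy gamma (K, 0) + t, the set F then contains a horizontal
   chain with steps of size about |gamma lam^|I|| and length about L times
   that.  Under the SSC a chain cannot leave the cylinder of its first point
   whose level is fixed by the step size, so its length is bounded by a
   constant times the step: a contradiction for L large. *)

From Stdlib Require Import Reals List Lra Lia Psatz Classical ClassicalEpsilon.
From Coquelicot Require Import Compactness.
Import ListNotations.
Open Scope R_scope.

Definition close2 (r : R) (z w : R * R) : Prop :=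
  Rabs (fst z - fst w) < r /\ Rabs (snd z - snd w) < r.

Definition phi_word (lam : R) (ts : list (R * R)) (M : list nat) (z : R * R) : R * R :=
  fold_right (fun i acc => phi2 lam ts i acc) z M.

Definition proj_x (F : R * R -> Prop) (x : R) : Prop := exists y, F (x, y).

Lemma Rabs_pow_le (lam : R) (k : nat) :
  Rabs lam <= 1 -> (1 <= k)%nat -> Rabs (lam ^ k) <= Rabs lam.
Proof.
  intros Hl Hk. destruct k as [|k]; [lia|].
  rewrite <- RPow_abs. simpl.
  assert (0 <= Rabs lam) by apply Rabs_pos.
  assert (Rabs lam ^ k <= 1) by (rewrite <- (pow1 k); apply pow_incr; lra).
  assert (0 <= Rabs lam ^ k) by (apply pow_le; lra).
  nra.
Qed.

Lemma pow_bracket (lam x y : R) :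
  0 < Rabs lam < 1 -> 0 < x < y ->
  exists k, y * Rabs lam ^ S k <= x < y * Rabs lam ^ k.
Proof.
  intros Hl Hxy.
  destruct (pow_lt_1_zero (Rabs lam) ltac:(rewrite Rabs_Rabsolu; lra) (x / y))
    as [n Hn]; [apply Rdiv_lt_0_compat; lra|].
  assert (Hfail : ~ x < y * Rabs lam ^ n).
  { specialize (Hn n (le_n n)).
    rewrite Rabs_pos_eq in Hn by (apply pow_le, Rabs_pos).
    apply Rle_not_lt. apply (Rmult_lt_compat_l y) in Hn; [|lra].
    replace (y * (x / y)) with x in Hn by (field; lra). lra. }
  clear Hn. induction n as [|n IH].
  - simpl in Hfail. lra.
  - destruct (classic (x < y * Rabs lam ^ n)) as [Hn|Hn].
    + exists n. lra.
    + exact (IH Hn).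
Qed.

Lemma pow_ratio_far_from_one (lam r : R) (a b : nat) :
  0 < Rabs lam < 1 -> a <> b -> lam ^ a * r = lam ^ b -> 1 - Rabs lam <= Rabs (r - 1).
Proof.
  intros Hl Hab E.
  assert (Hl0 : lam <> 0) by (intros ->; rewrite Rabs_R0 in Hl; lra).
  assert (Htri : Rabs r - 1 <= Rabs (r - 1) /\ 1 - Rabs r <= Rabs (r - 1)).
  { pose proof (Rabs_triang_inv r 1) as H1. pose proof (Rabs_triang_inv 1 r) as H2.
    rewrite Rabs_R1 in *. rewrite Rabs_minus_sym in H2. lra. }
  destruct (proj1 (Nat.lt_gt_cases a b) Hab) as [Hlt|Hgt].
  - replace b with (a + (b - a))%nat in E by lia. rewrite pow_add in E.
    apply Rmult_eq_reg_l in E; [|apply pow_nonzero; auto].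
    pose proof (Rabs_pow_le lam (b - a) ltac:(lra) ltac:(lia)). subst r. lra.
  - replace a with (b + (a - b))%nat in E by lia. rewrite pow_add, Rmult_assoc in E.
    rewrite <- (Rmult_1_r (lam ^ b)) in E at 2.
    apply Rmult_eq_reg_l in E; [|apply pow_nonzero; auto].
    pose proof (Rabs_pow_le lam (a - b) ltac:(lra) ltac:(lia)).
    assert (E' : Rabs (lam ^ (a - b)) * Rabs r = 1) by (rewrite <- Rabs_mult, E; apply Rabs_R1).
    assert (0 <= Rabs (lam ^ (a - b))) by apply Rabs_pos.
    assert (0 <= Rabs r) by apply Rabs_pos.
    nra.
Qed.

Lemma uniform_positive_bound (P : nat -> R -> Prop) (n : nat) :
  (forall k d d', 0 < d' <= d -> P k d -> P k d') ->
  (forall k, (k < n)%nat -> exists d, 0 < d /\ P k d) ->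
  exists d, 0 < d /\ forall k, (k < n)%nat -> P k d.
Proof.
  intros Hmono. induction n as [|n IH]; intros Hex.
  - exists 1. split; [lra|]. intros k Hk. lia.
  - destruct IH as (d1 & Hd1 & H1); [intros k Hk; apply Hex; lia|].
    destruct (Hex n (Nat.lt_succ_diag_r n)) as (d2 & Hd2 & H2).
    exists (Rmin d1 d2). split; [now apply Rmin_glb_lt|].
    intros k Hk. destruct (Nat.eq_dec k n) as [->|Hne].
    + apply (Hmono n d2); [split; [now apply Rmin_glb_lt|apply Rmin_r]|exact H2].
    + apply (Hmono k d1); [split; [now apply Rmin_glb_lt|apply Rmin_l]|apply H1; lia].
Qed.

Lemma close2_mono (r r' : R) (z w : R * R) : r <= r' -> close2 r z w -> close2 r' z w.
Proof. intros Hr [H1 H2]. split; lra. Qed.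

(* A Lebesgue number for the cover of a square containing [A] by boxes that miss [A] or miss [B]. *)
Lemma closed_bounded_apart (A B : R * R -> Prop) :
  bounded2 A -> closed2 A -> closed2 B -> (forall z, A z -> B z -> False) ->
  exists d, 0 < d /\ forall a b, A a -> B b -> ~ close2 d a b.
Proof.
  intros [M HM] HAcl HBcl Hdisj.
  assert (Hrad : forall c : R * R, exists r : posreal,
    (forall a, A a -> ~ close2 r a c) \/ (forall b, B b -> ~ close2 r b c)).
  { intros c. apply NNPP. intros Hno.
    assert (Hnear : forall X : R * R -> Prop, closed2 X ->
              (forall r : posreal, ~ forall x, X x -> ~ close2 r x c) -> X c).
    { intros X HX Hr. apply HX. intros eps Heps. apply NNPP. intros Hfar.
      apply (Hr (mkposreal eps Heps)). intros x Hx Hxc. apply Hfar. now exists x. }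
    apply (Hdisj c); apply Hnear; auto; intros r Hr; apply Hno; exists r; auto. }
  destruct (choice _ Hrad) as [f Hf].
  destruct (compactness_value_2d (- M) M (- M) M
              (fun u v => mkposreal (f (u, v) / 2) ltac:(pose proof (cond_pos (f (u, v))); lra)))
    as [d Hd].
  exists d. split; [apply cond_pos|]. intros a b Ha Hb [Hab1 Hab2].
  assert (Hbox : forall x, Rabs x <= M -> - M <= x <= M).
  { intros x Hx. pose proof (Rle_abs x). pose proof (Rle_abs (- x)); rewrite Rabs_Ropp in *; lra. }
  destruct (HM a Ha) as [Ha1 Ha2].
  apply (Hd (fst a) (snd a) (Hbox _ Ha1) (Hbox _ Ha2)).
  intros (u & v & _ & _ & Hu & Hv & Hdu). simpl in Hu, Hv, Hdu.
  pose proof (cond_pos (f (u, v))).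
  destruct (Hf (u, v)) as [HA|HB].
  - apply (HA a Ha). split; simpl; lra.
  - apply (HB b Hb). split; simpl.
    + pose proof (Rabs_triang (fst b - fst a) (fst a - u)) as Htri.
      replace (fst b - fst a + (fst a - u)) with (fst b - u) in Htri by ring.
      rewrite Rabs_minus_sym in Hab1. lra.
    + pose proof (Rabs_triang (snd b - snd a) (snd a - v)) as Htri.
      replace (snd b - snd a + (snd a - v)) with (snd b - v) in Htri by ring.
      rewrite Rabs_minus_sym in Hab2. lra.
Qed.

Section Words.

Variables (lam : R) (ts : list (R * R)).

Lemma psi_word_app (I J : list nat) (x : R) :
  psi_word lam ts (I ++ J) x = psi_word lam ts I (psi_word lam ts J x).
Proof. unfold psi_word. now rewrite fold_right_app. Qed.

Lemma psi_word_shift (I : list nat) (x y : R) :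
  psi_word lam ts I (x + y) = psi_word lam ts I x + lam ^ length I * y.
Proof.
  induction I as [|i I IH]; cbn [psi_word fold_right length].
  - simpl. ring.
  - fold (psi_word lam ts I (x + y)) (psi_word lam ts I x).
    rewrite IH. unfold psi1. simpl. ring.
Qed.

Lemma phi_word_fst (M : list nat) (z : R * R) :
  fst (phi_word lam ts M z) = psi_word lam ts M (fst z).
Proof.
  induction M as [|i M IH]; [reflexivity|].
  simpl. rewrite IH. reflexivity.
Qed.

Lemma phi2_inj (i : nat) (z w : R * R) :
  lam <> 0 -> phi2 lam ts i z = phi2 lam ts i w -> z = w.
Proof.
  intros Hl E. unfold phi2 in E. injection E as E1 E2.
  apply injective_projections; apply (Rmult_eq_reg_l lam); lra.
Qed.

End Words.

Section Attractor.

Variables (lam : R) (ts : list (R * R)) (F : R * R -> Prop).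
Hypothesis HF : is_attractor2 lam ts F.

Lemma attractor_phi2 (i : nat) (w : R * R) :
  (i < length ts)%nat -> F w -> F (phi2 lam ts i w).
Proof.
  intros Hi Hw. apply (proj2 (proj2 (proj2 HF))). eauto.
Qed.

Lemma attractor_phi_word (M : list nat) (z : R * R) :
  is_word ts M -> F z -> F (phi_word lam ts M z).
Proof.
  induction 1 as [|i M Hi _ IH]; intros Hz; [exact Hz|].
  exact (attractor_phi2 i _ Hi (IH Hz)).
Qed.

Lemma proj_x_psi_word (I : list nat) (x : R) :
  is_word ts I -> proj_x F x -> proj_x F (psi_word lam ts I x).
Proof.
  intros HI [y Hy]. exists (snd (phi_word lam ts I (x, y))).
  change x with (fst (x, y)) at 1.
  rewrite <- phi_word_fst, <- surjective_pairing.
  exact (attractor_phi_word I _ HI Hy).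
Qed.

End Attractor.

Definition shifts_absorbed (lam : R) (ts : list (R * R)) (F : R * R -> Prop)
  (D : R -> Prop) (p : nat) : Prop :=
  exists I, is_word ts I /\ length I = p /\
    forall s x, D s -> proj_x F x -> proj_x F (psi_word lam ts I (x + s)).

Definition small_translations (lam : R) (ts : list (R * R)) (F : R * R -> Prop) : Prop :=
  forall eps, 0 < eps -> exists beta q, 0 < Rabs beta < eps /\
    shifts_absorbed lam ts F (fun y => y = 0 \/ y = beta) q /\
    shifts_absorbed lam ts F (fun y => y = 0 \/ y = - beta) q.

Section AbsorbedShifts.

Variables (lam : R) (ts : list (R * R)) (F : R * R -> Prop).

Lemma shifts_absorbed_sub (D D' : R -> Prop) (p : nat) :
  (forall s, D' s -> D s) -> shifts_absorbed lam ts F D p -> shifts_absorbed lam ts F D' p.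
Proof.
  intros HS (I & HI & Hl & H). exists I. repeat split; auto.
Qed.

Lemma shifts_absorbed_comp (D D' : R -> Prop) (p q : nat) :
  lam <> 0 -> shifts_absorbed lam ts F D p -> shifts_absorbed lam ts F D' q ->
  shifts_absorbed lam ts F (fun y => exists s s', D s /\ D' s' /\ y = s + s' / lam ^ p) (q + p).
Proof.
  intros Hl (I & HI & HlI & H) (J & HJ & HlJ & H').
  exists (J ++ I). split; [apply Forall_app; auto|].
  split; [rewrite length_app; lia|].
  intros y x (s & s' & Hs & Hs' & ->) Hx.
  rewrite psi_word_app.
  replace (x + (s + s' / lam ^ p)) with (x + s + s' / lam ^ p) by ring.
  rewrite psi_word_shift, HlI.
  replace (lam ^ p * (s' / lam ^ p)) with s' by (field; apply pow_nonzero; auto).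
  auto.
Qed.

Hypothesis HF : is_attractor2 lam ts F.

Lemma shifts_absorbed_zero (k : nat) :
  (0 < length ts)%nat -> shifts_absorbed lam ts F (fun y => y = 0) k.
Proof.
  intros Hts. exists (repeat 0%nat k).
  assert (Hw : is_word ts (repeat 0%nat k)).
  { apply Forall_forall. intros i Hi. now rewrite (repeat_spec _ _ _ Hi). }
  repeat split; [exact Hw|apply repeat_length|].
  intros s x -> Hx. rewrite Rplus_0_r. exact (proj_x_psi_word lam ts F HF _ _ Hw Hx).
Qed.

Hypothesis Hlam : 0 < Rabs lam < 1.
Hypothesis Hts : (0 < length ts)%nat.

(* Push a small [beta] down by a prefix of [k] zeros, with [k] and the sign of [beta] chosen
   so that [beta / lam^k] lands in the window on the ray of [rho]. *)
Lemma shift_absorbed_in_window (mu rho : R) :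
  small_translations lam ts F -> 0 < mu -> rho <> 0 ->
  exists c q, mu * Rabs lam <= c < mu /\
    shifts_absorbed lam ts F (fun y => y = 0 \/ y = c * rho) q.
Proof.
  intros HT Hmu Hrho.
  assert (Hl0 : lam <> 0) by (intros ->; rewrite Rabs_R0 in Hlam; lra).
  assert (Hr : 0 < Rabs rho) by (apply Rabs_pos_lt; auto).
  destruct (HT (mu * Rabs rho) ltac:(nra)) as (beta & q & Hbeta & Gp & Gm).
  destruct (pow_bracket lam (Rabs beta) (mu * Rabs rho) Hlam ltac:(lra)) as (k & Hk).
  assert (Hlk : lam ^ k * rho <> 0) by (apply Rmult_integral_contrapositive; split; auto;
    apply pow_nonzero; auto).
  set (c := Rabs (beta / (lam ^ k * rho))).
  assert (Hc : c * Rabs rho * Rabs lam ^ k = Rabs beta).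
  { unfold c. rewrite RPow_abs, <- !Rabs_mult. f_equal. field.
    split; auto; apply pow_nonzero; auto. }
  assert (Hpk : 0 < Rabs lam ^ k) by (apply pow_lt; lra).
  assert (Hsign : exists b, shifts_absorbed lam ts F (fun y => y = 0 \/ y = b) q /\
                            b / (lam ^ k * rho) = c).
  { unfold c. destruct (Rle_or_lt 0 (beta / (lam ^ k * rho))) as [Hs|Hs].
    - exists beta. rewrite Rabs_pos_eq; auto.
    - exists (- beta). rewrite Rabs_left by auto. split; [exact Gm|]. field. split; auto; apply pow_nonzero; auto. }
  destruct Hsign as (b & Gb & Hb).
  exists c, (q + k)%nat. split.
  - simpl in Hk. split; nra.
  - eapply shifts_absorbed_sub; [|exact (shifts_absorbed_comp _ _ k q Hl0 (shifts_absorbed_zero k Hts) Gb)].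
    intros y [->| ->].
    + exists 0, 0. repeat split; auto. unfold Rdiv. ring.
    + exists 0, b. repeat split; auto. rewrite <- Hb. field. split; auto. apply pow_nonzero; auto.
Qed.

End AbsorbedShifts.

Lemma not_WSC_small_translations (lam : R) (ts : list (R * R)) (F : R * R -> Prop) :
  is_attractor2 lam ts F -> 0 < Rabs lam < 1 -> ~ WSC1 lam ts -> small_translations lam ts F.
Proof.
  intros HF Hlam HW. apply NNPP in HW. intros eps Heps.
  assert (Hl0 : lam <> 0) by (intros ->; rewrite Rabs_R0 in Hlam; lra).
  set (e := Rmin eps ((1 - Rabs lam) / 2)).
  assert (He : 0 < e) by (apply Rmin_glb_lt; lra).
  assert (He1 : e <= eps) by apply Rmin_l.
  assert (He2 : e <= (1 - Rabs lam) / 2) by apply Rmin_r.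
  destruct (HW [0; 1] e He) as (I & J & g & HI & HJ & _ & Hrel & [x0 Hx0] & Hclose).
  pose proof (Hclose 0 ltac:(simpl; auto)) as H0.
  pose proof (Hclose 1 ltac:(simpl; auto)) as H1.
  rewrite Rminus_0_r in H0.
  assert (Haff : forall x, psi_word lam ts I 0 + lam ^ length I * g x =
                           psi_word lam ts J 0 + lam ^ length J * x).
  { intros x. rewrite <- !psi_word_shift, !Rplus_0_l. apply Hrel. }
  assert (Hlen : length I = length J).
  { apply NNPP. intros Hne.
    assert (Hslope : lam ^ length I * (g 1 - g 0) = lam ^ length J).
    { pose proof (Haff 1). pose proof (Haff 0). nra. }
    pose proof (pow_ratio_far_from_one lam _ _ _ Hlam Hne Hslope).
    pose proof (Rabs_triang (g 1 - 1) (- g 0)). rewrite Rabs_Ropp in H2.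
    replace (g 1 - 1 + - g 0) with (g 1 - g 0 - 1) in H2 by ring. lra. }
  assert (Htrans : forall x, g x = x + g 0).
  { intros x. pose proof (Haff x). pose proof (Haff 0). rewrite Hlen in *.
    apply (Rmult_eq_reg_l (lam ^ length J)); [nra|apply pow_nonzero; auto]. }
  exists (g 0), (length I). split; [split|split].
  - apply Rabs_pos_lt. intros Z. apply Hx0. rewrite Htrans, Z. ring.
  - lra.
  - exists I. repeat split; auto. intros s x [-> | ->] Hx.
    + rewrite Rplus_0_r. exact (proj_x_psi_word lam ts F HF I x HI Hx).
    + rewrite <- Htrans, Hrel. exact (proj_x_psi_word lam ts F HF J x HJ Hx).
  - exists J. rewrite Hlen. repeat split; auto. intros s x [-> | ->] Hx.
    + rewrite Rplus_0_r. exact (proj_x_psi_word lam ts F HF J x HJ Hx).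
    + rewrite <- Hrel, Htrans. replace (x + - g 0 + g 0) with x by ring.
      exact (proj_x_psi_word lam ts F HF I x HI Hx).
Qed.

Definition dense_on (D : R -> Prop) (a L : R) : Prop :=
  forall y, a <= y <= a + L -> exists s, D s /\ Rabs (y - s) <= 1.

Lemma dense_on_shift_union (D : R -> Prop) (a L b : R) :
  dense_on D a L -> 0 <= b <= L -> dense_on (fun y => D y \/ D (y - b)) a (L + b).
Proof.
  intros HD Hb y Hy.
  destruct (Rle_or_lt y (a + L)) as [Hle|Hgt].
  - destruct (HD y ltac:(lra)) as (s & Hs & Hd). eauto.
  - destruct (HD (y - b) ltac:(lra)) as (s & Hs & Hd). exists (s + b). split.
    + right. now replace (s + b - b) with s by ring.
    + now replace (y - (s + b)) with (y - b - s) by ring.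
Qed.

Section Density.

Variables (lam : R) (ts : list (R * R)) (F : R * R -> Prop).
Hypothesis HF : is_attractor2 lam ts F.
Hypothesis Hlam : 0 < Rabs lam < 1.
Hypothesis Hts : (0 < length ts)%nat.
Hypothesis HT : small_translations lam ts F.

Lemma absorbed_dense_step (D : R -> Prop) (p : nat) (L : R) :
  shifts_absorbed lam ts F D p -> dense_on D 0 L -> 0 < L ->
  exists D' p', shifts_absorbed lam ts F D' p' /\ dense_on D' 0 (L * (1 + Rabs lam)).
Proof.
  intros HG HD HL.
  assert (Hl0 : lam <> 0) by (intros ->; rewrite Rabs_R0 in Hlam; lra).
  assert (Hp : lam ^ p <> 0) by (apply pow_nonzero; auto).
  destruct (shift_absorbed_in_window lam ts F HF Hlam Hts L (lam ^ p) HT HL Hp)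
    as (c & q & Hc & Gc).
  exists (fun y => D y \/ D (y - c)), (q + p)%nat. split.
  - eapply shifts_absorbed_sub; [|exact (shifts_absorbed_comp lam ts F _ _ p q Hl0 HG Gc)].
    intros y [Hy|Hy].
    + exists y, 0. repeat split; auto. unfold Rdiv. ring.
    + exists (y - c), (c * lam ^ p). repeat split; auto. field. auto.
  - intros y Hy. apply (dense_on_shift_union D 0 L c HD); [|nra].
    assert (0 <= L * Rabs lam) by (apply Rmult_le_pos; lra). lra.
Qed.

Lemma absorbed_dense_long (L : R) :
  exists D p, shifts_absorbed lam ts F D p /\ dense_on D 0 L.
Proof.
  assert (Hlong : forall n, exists D p,
    shifts_absorbed lam ts F D p /\ dense_on D 0 (1 + INR n * Rabs lam)).
  { induction n as [|n (D & p & HG & HD)].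
    - exists (fun y => y = 0), 0%nat. split; [exact (shifts_absorbed_zero lam ts F HF 0 Hts)|].
      intros y Hy. exists 0. split; auto. simpl in Hy. rewrite Rminus_0_r, Rabs_pos_eq; lra.
    - assert (0 <= INR n) by apply pos_INR.
      destruct (absorbed_dense_step D p _ HG HD ltac:(nra)) as (D' & p' & HG' & HD').
      exists D', p'. split; auto. intros y Hy. apply HD'. rewrite S_INR in Hy. nra. }
  destruct (INR_unbounded (L / Rabs lam)) as [n Hn].
  destruct (Hlong n) as (D & p & HG & HD). exists D, p. split; auto.
  intros y Hy. apply HD.
  assert (L <= INR n * Rabs lam).
  { replace L with (L / Rabs lam * Rabs lam) by (field; lra). apply Rmult_le_compat_r; lra. }
  lra.
Qed.

End Density.

Section Separation.

Variables (lam : R) (ts : list (R * R)) (F : R * R -> Prop).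
Hypothesis HF : is_attractor2 lam ts F.
Hypothesis Hl0 : lam <> 0.

Lemma closed2_phi2_image (i : nat) :
  closed2 (fun z => exists w, F w /\ z = phi2 lam ts i w).
Proof.
  destruct HF as (_ & _ & HFcl & _).
  assert (Hl : 0 < Rabs lam) by (apply Rabs_pos_lt; auto).
  set (t := nth i ts (0, 0)).
  intros z Hz. exists ((fst z - fst t) / lam, (snd z - snd t) / lam). split.
  - apply HFcl. intros eps Heps.
    destruct (Hz (eps * Rabs lam) ltac:(nra)) as (z' & (w & Hw & ->) & H1 & H2).
    exists w. split; [exact Hw|]. unfold phi2 in H1, H2. fold t in H1, H2. simpl in *.
    replace (lam * fst w + fst t - fst z) with (lam * (fst w - (fst z - fst t) / lam)) in H1
      by (field; auto).
    replace (lam * snd w + snd t - snd z) with (lam * (snd w - (snd z - snd t) / lam)) in H2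
      by (field; auto).
    rewrite Rabs_mult in H1, H2. split; nra.
  - unfold phi2. fold t. simpl. apply injective_projections; simpl; field; auto.
Qed.

Hypothesis Hssc : SSC2 lam ts F.

Lemma ssc_separation :
  exists d, 0 < d /\ forall i j w w', (i < length ts)%nat -> (j < length ts)%nat -> i <> j ->
    F w -> F w' -> ~ close2 d (phi2 lam ts i w) (phi2 lam ts j w').
Proof.
  pose proof HF as (_ & [M HM] & _ & _).
  destruct (uniform_positive_bound (fun i d => forall j, (j < length ts)%nat -> forall w w', i <> j ->
              F w -> F w' -> ~ close2 d (phi2 lam ts i w) (phi2 lam ts j w')) (length ts))
    as (d & Hd & Hsep).
  - intros i d d' Hd' H j Hj w w' Hij Hw Hw' Hc.
    apply (H j Hj w w' Hij Hw Hw'). apply (close2_mono d'); [lra|exact Hc].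
  - intros i Hi.
    apply (uniform_positive_bound (fun j d => forall w w', i <> j ->
              F w -> F w' -> ~ close2 d (phi2 lam ts i w) (phi2 lam ts j w'))).
    + intros j d d' Hd' H w w' Hij Hw Hw' Hc.
      apply (H w w' Hij Hw Hw'). apply (close2_mono d'); [lra|exact Hc].
    + intros j Hj. destruct (Nat.eq_dec i j) as [<-|Hij].
      * exists 1. split; [lra|]. intros w w' Hii. now contradiction Hii.
      * destruct (closed_bounded_apart (fun z => exists w, F w /\ z = phi2 lam ts i w)
                    (fun z => exists w, F w /\ z = phi2 lam ts j w)) as (d & Hd & Hap).
        -- exists M. intros z (w & Hw & ->). apply HM, attractor_phi2; auto.
        -- apply closed2_phi2_image.
        -- apply closed2_phi2_image.
        -- intros z (w & Hw & ->) (w' & Hw' & E). exact (Hssc i j Hi Hj Hij w w' Hw Hw' E).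
        -- exists d. split; [exact Hd|]. intros w w' _ Hw Hw'. apply Hap; eauto.
  - exists d. split; [exact Hd|]. intros i j w w' Hi Hj Hij. exact (Hsep i Hi j Hj w w' Hij).
Qed.

End Separation.

Section Addresses.

Variables (lam : R) (ts : list (R * R)) (F : R * R -> Prop).
Hypothesis HF : is_attractor2 lam ts F.
Hypothesis Hlam : 0 < Rabs lam < 1.
Hypothesis Hssc : SSC2 lam ts F.

Let Hl0 : lam <> 0.
Proof. intros ->. rewrite Rabs_R0 in Hlam. lra. Qed.

Lemma phi_word_address_unique (M M' : list nat) (v v' : R * R) :
  length M = length M' -> is_word ts M -> is_word ts M' -> F v -> F v' ->
  phi_word lam ts M v = phi_word lam ts M' v' -> M = M'.
Proof.
  revert M'. induction M as [|i M IH]; intros [|i' M'] Hlen HM HM' Hv Hv' E;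
    simpl in Hlen; try lia; [reflexivity|].
  inversion HM as [|? ? Hi HM1]; inversion HM' as [|? ? Hi' HM1']; subst.
  destruct (Nat.eq_dec i i') as [<-|Hne].
  - f_equal. apply IH; auto. exact (phi2_inj lam ts i _ _ Hl0 E).
  - exfalso. exact (Hssc i i' Hi Hi' Hne _ _ (attractor_phi_word lam ts F HF M v HM1 Hv)
                      (attractor_phi_word lam ts F HF M' v' HM1' Hv') E).
Qed.

Lemma close2_phi2_inv (i : nat) (r : R) (w w' : R * R) :
  close2 (Rabs lam * r) (phi2 lam ts i w) (phi2 lam ts i w') -> close2 r w w'.
Proof.
  unfold close2, phi2. simpl. intros [H1 H2].
  replace (lam * fst w + fst (nth i ts (0, 0)) - (lam * fst w' + fst (nth i ts (0, 0))))
    with (lam * (fst w - fst w')) in H1 by ring.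
  replace (lam * snd w + snd (nth i ts (0, 0)) - (lam * snd w' + snd (nth i ts (0, 0))))
    with (lam * (snd w - snd w')) in H2 by ring.
  rewrite Rabs_mult in H1, H2. split; nra.
Qed.

Lemma close_points_share_address (d : R) :
  0 < d ->
  (forall i j w w', (i < length ts)%nat -> (j < length ts)%nat -> i <> j ->
     F w -> F w' -> ~ close2 d (phi2 lam ts i w) (phi2 lam ts j w')) ->
  forall m u u', F u -> F u' -> close2 (d * Rabs lam ^ m) u u' ->
    exists M v v', is_word ts M /\ length M = m /\ F v /\ F v' /\
      u = phi_word lam ts M v /\ u' = phi_word lam ts M v'.
Proof.
  intros Hdpos Hd. induction m as [|m IH]; intros u u' Hu Hu' Hc.
  - exists nil, u, u'. repeat split; auto. constructor.
  - pose proof HF as (_ & _ & _ & Hatt).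
    destruct (proj1 (Hatt u) Hu) as (i & Hi & w & Hw & ->).
    destruct (proj1 (Hatt u') Hu') as (j & Hj & w' & Hw' & ->).
    assert (Hpow : Rabs lam ^ S m <= 1) by (rewrite <- (pow1 (S m)); apply pow_incr; split;
      [apply Rabs_pos|lra]).
    destruct (Nat.eq_dec i j) as [<-|Hij].
    2:{ exfalso. apply (Hd i j w w' Hi Hj Hij Hw Hw').
        apply (close2_mono (d * Rabs lam ^ S m)); [|exact Hc].
        nra. }
    replace (d * Rabs lam ^ S m) with (Rabs lam * (d * Rabs lam ^ m)) in Hc by (simpl; ring).
    destruct (IH w w' Hw Hw' (close2_phi2_inv i _ w w' Hc)) as (M & v & v' & HM & HlM & HFv).
    exists (i :: M), v, v'. simpl. repeat split; try tauto.
    + now constructor.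
    + now rewrite HlM.
    + now f_equal.
    + now f_equal.
Qed.

Lemma horizontal_chain_span :
  exists C, forall eta, 0 < eta -> forall (z : nat -> R * R) (N : nat) (h : R),
    (forall j, (j <= N)%nat -> F (z j) /\ snd (z j) = h) ->
    (forall j, (j < N)%nat -> Rabs (fst (z (S j)) - fst (z j)) <= eta) ->
    Rabs (fst (z N) - fst (z 0%nat)) <= C * eta.
Proof.
  destruct (ssc_separation lam ts F HF Hl0 Hssc) as (d & Hd & Hsep).
  pose proof HF as ([z0 Hz0] & [B HB] & _ & _).
  assert (Hwidth : forall v v', F v -> F v' -> Rabs (fst v - fst v') <= 2 * B).
  { intros v v' Hv Hv'. destruct (HB v Hv) as [Hv1 _], (HB v' Hv') as [Hv1' _].
    pose proof (Rabs_triang (fst v) (- fst v')) as Htri. rewrite Rabs_Ropp in Htri.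
    unfold Rminus. lra. }
  assert (HB0 : 0 <= B) by (destruct (HB z0 Hz0) as [H _]; pose proof (Rabs_pos (fst z0)); lra).
  assert (Hl : 0 < Rabs lam) by lra.
  exists (2 * B / (d * Rabs lam)). intros eta Heta z N h Hz Hstep.
  assert (HC : 2 * B / (d * Rabs lam) * eta = 2 * B * (eta / (d * Rabs lam))) by (field; lra).
  rewrite HC.
  destruct (Rle_or_lt d eta) as [Hbig|Hsmall].
  - assert (1 <= eta / (d * Rabs lam)).
    { apply (Rmult_le_reg_r (d * Rabs lam)); [nra|].
      replace (eta / (d * Rabs lam) * (d * Rabs lam)) with eta by (field; lra). nra. }
    pose proof (Hwidth (z N) (z 0%nat) (proj1 (Hz N (le_n N))) (proj1 (Hz 0%nat ltac:(lia)))).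
    nra.
  - destruct (pow_bracket lam eta d Hlam ltac:(lra)) as (m & Hm1 & Hm2).
    destruct (Hz 0%nat ltac:(lia)) as [Hz0' Hh0].
    destruct (close_points_share_address d Hd Hsep m _ _ Hz0' Hz0')
      as (M0 & v0 & _ & HM0 & HlM0 & Hv0 & _ & E0 & _).
    { split; rewrite Rminus_diag, Rabs_R0; apply Rmult_lt_0_compat; auto; apply pow_lt; lra. }
    assert (Hcyl : forall j, (j <= N)%nat -> exists v, F v /\ z j = phi_word lam ts M0 v).
    { induction j as [|j IH]; intros Hj; [now exists v0|].
      destruct (IH ltac:(lia)) as (v & Hv & Ev).
      destruct (Hz j ltac:(lia)) as [Hzj Hhj]. destruct (Hz (S j) Hj) as [HzSj HhSj].
      destruct (close_points_share_address d Hd Hsep m _ _ HzSj Hzj)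
        as (M & a & a' & HM & HlM & Ha & Ha' & Ea & Ea').
      { split; [pose proof (Hstep j ltac:(lia)); lra|].
        rewrite HhSj, Hhj, Rminus_diag, Rabs_R0. apply Rmult_lt_0_compat; auto; apply pow_lt; lra. }
      assert (M = M0).
      { apply (phi_word_address_unique M M0 a' v); auto; try lia. now rewrite <- Ea', Ev. }
      subst M. now exists a. }
    destruct (Hcyl N (le_n N)) as (vN & HvN & EN).
    rewrite EN, E0, !phi_word_fst.
    replace (fst vN) with (fst v0 + (fst vN - fst v0)) by ring.
    rewrite psi_word_shift, HlM0.
    replace (psi_word lam ts M0 (fst v0) + lam ^ m * (fst vN - fst v0) - psi_word lam ts M0 (fst v0))
      with (lam ^ m * (fst vN - fst v0)) by ring.
    rewrite Rabs_mult, <- RPow_abs.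
    assert (Rabs lam ^ m <= eta / (d * Rabs lam)).
    { apply (Rmult_le_reg_r (d * Rabs lam)); [nra|].
      replace (eta / (d * Rabs lam) * (d * Rabs lam)) with eta by (field; lra). simpl in Hm1. nra. }
    pose proof (Hwidth vN v0 HvN Hv0). pose proof (pow_le (Rabs lam) m (Rabs_pos lam)).
    pose proof (Rabs_pos (fst vN - fst v0)). nra.
Qed.

End Addresses.

Lemma embedded_horizontal_chain (lam : R) (ts : list (R * R)) (F : R * R -> Prop)
  (gamma : R) (t : R * R) (D : R -> Prop) (p N : nat) (x0 : R) :
  (forall w, F w -> F (gamma * fst w + fst t, snd t)) ->
  proj_x F x0 -> shifts_absorbed lam ts F D p -> dense_on D 0 (INR N) ->
  exists z : nat -> R * R,
    (forall j, (j <= N)%nat -> F (z j) /\ snd (z j) = snd t) /\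
    (forall j, (j < N)%nat -> Rabs (fst (z (S j)) - fst (z j)) <= 3 * Rabs (gamma * lam ^ p)) /\
    Rabs (gamma * lam ^ p) * (INR N - 2) <= Rabs (fst (z N) - fst (z 0%nat)).
Proof.
  intros Hsub Hx0 (I & HI & HlI & HG) HD.
  destruct (choice (fun j s => (j <= N)%nat -> D s /\ Rabs (INR j - s) <= 1)) as [s Hs].
  { intros j. destruct (Nat.le_gt_cases j N) as [Hj|Hj].
    - destruct (HD (INR j)) as (s & Hs & Hjs); [split; [apply pos_INR|apply le_INR in Hj; lra]|].
      now exists s.
    - exists 0. lia. }
  set (alpha := gamma * lam ^ p).
  set (b := gamma * psi_word lam ts I x0 + fst t).
  exists (fun j => (gamma * psi_word lam ts I (x0 + s j) + fst t, snd t)).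
  assert (Hz : forall j, gamma * psi_word lam ts I (x0 + s j) + fst t = b + alpha * s j).
  { intros j. rewrite psi_word_shift, HlI. unfold alpha, b. ring. }
  simpl. split; [|split].
  - intros j Hj. split; [|reflexivity].
    destruct (HG (s j) x0 (proj1 (Hs j Hj)) Hx0) as [y Hy]. exact (Hsub _ Hy).
  - intros j Hj. rewrite !Hz.
    replace (b + alpha * s (S j) - (b + alpha * s j))
      with (alpha * ((s (S j) - INR (S j)) + 1 + (INR j - s j))) by (rewrite S_INR; ring).
    destruct (Hs (S j) Hj) as [_ H1]. destruct (Hs j ltac:(lia)) as [_ H2].
    rewrite Rabs_minus_sym in H1.
    rewrite Rabs_mult, (Rmult_comm 3). apply Rmult_le_compat_l; [apply Rabs_pos|].
    pose proof (Rabs_triang (s (S j) - INR (S j) + 1) (INR j - s j)).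
    pose proof (Rabs_triang (s (S j) - INR (S j)) 1). rewrite Rabs_R1 in *. lra.
  - rewrite !Hz. replace (b + alpha * s N - (b + alpha * s 0%nat)) with (alpha * (s N - s 0%nat))
      by ring.
    rewrite Rabs_mult. apply Rmult_le_compat_l; [apply Rabs_pos|].
    destruct (Hs N (le_n N)) as [_ HsN]. destruct (Hs 0%nat ltac:(lia)) as [_ Hs0].
    simpl in Hs0. rewrite Rminus_0_l, Rabs_Ropp in Hs0.
    pose proof (Rle_abs (INR N - s N)). pose proof (Rle_abs (s 0%nat)).
    pose proof (Rle_abs (s N - s 0%nat)). lra.
Qed.

Theorem lemma6p6 (lam : R) (ts : list (R * R)) (F : R * R -> Prop)
  (Hlam : 0 < Rabs lam < 1)
  (HF : is_attractor2 lam ts F)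
  (Hssc : SSC2 lam ts F)
  (Hline : ~ in_affine_line F)
  (gamma : R) (t : R * R) (Hgamma : 0 < gamma)
  (Hsub : forall w, F w -> F (gamma * fst w + fst t, snd t)) :
  WSC1 lam ts.
Proof.
  apply NNPP. intros HW.
  assert (Hl0 : lam <> 0) by (intros ->; rewrite Rabs_R0 in Hlam; lra).
  pose proof HF as ([[x0 y0] Hz0] & _ & _ & Hatt).
  assert (Hts : (0 < length ts)%nat) by (destruct (proj1 (Hatt _) Hz0) as (i & Hi & _); lia).
  pose proof (not_WSC_small_translations lam ts F HF Hlam HW) as HT.
  destruct (horizontal_chain_span lam ts F HF Hlam Hssc) as [C HC].
  destruct (INR_unbounded (3 * C + 2)) as [N HN].
  destruct (absorbed_dense_long lam ts F HF Hlam Hts HT (INR N)) as (D & p & HG & HD).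
  destruct (embedded_horizontal_chain lam ts F gamma t D p N x0 Hsub (ex_intro _ y0 Hz0) HG HD)
    as (z & Hchain & Hsteps & Hlong).
  set (alpha := Rabs (gamma * lam ^ p)) in *.
  assert (Halpha : 0 < alpha) by (apply Rabs_pos_lt, Rmult_integral_contrapositive;
    split; [lra|apply pow_nonzero; auto]).
  pose proof (HC (3 * alpha) ltac:(lra) z N (snd t) Hchain Hsteps). nra.
Qed.
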